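(* Let $\mathbf{V}\in\mathbb{R}^{L\times d}$, let $L=km$ and let $G_1,\dots,G_k$ be a partition of $\{1,\dots,L\}$ into groups of size $m$. Let $M\in\mathbb{R}^{k\times L}$ be given by $M_{g,i}=1/m$ if $i\in G_g$ and $M_{g,i}=0$ otherwise. Put $H=2\mathbf{V}^\top\mathbf{V}$ and $\bar H=2\mathbf{V}^\top M^\top M\mathbf{V}$. Then $\lambda_{\max}(\bar H)\le \lambda_{\max}(H)/m$.
   Context: $\lambda_{\max}$ denotes the largest eigenvalue of a symmetric matrix. *)

From HB Require Import structures.
From mathcomp Require Import all_boot all_order all_algebra.
From mathcomp Require Import reals.
Set Implicit Arguments. Unset Strict Implicit. Unset Printing Implicit Defensive.
Import Order.TTheory GRing.Theory Num.Theory.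
Local Open Scope ring_scope.

Definition is_lambda_max (R : realType) (n : nat) (A : 'M[R]_n) (l : R) : Prop :=
  eigenvalue A l /\ (forall a : R, eigenvalue A a -> a <= l).

Definition avg_mx (R : realType) (k L m : nat) (G : 'I_k -> {set 'I_L}) : 'M[R]_(k, L) :=
  \matrix_(g < k, i < L) (if i \in G g then (m%:R)^-1 else 0).

(* Take an eigenvector x of Hbar for its largest eigenvalue and put u = x V^T.
   Then lambda_max(Hbar) |x|^2 = 2 |u M^T|^2, and the g-th entry of u M^T is the
   mean of u over the group G_g, so Cauchy-Schwarz on each group gives
   |u M^T|^2 <= |u|^2 / m.  Finally 2 |u|^2 = x H x^T <= lambda_max(H) |x|^2 is
   the Rayleigh bound, which for a real symmetric matrix follows from the
   spectral theorem applied to its complexification. *)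

From HB Require Import structures.
From mathcomp Require Import all_boot all_order all_algebra.
From mathcomp Require Import reals complex ring lra.
Set Implicit Arguments.
Unset Strict Implicit.
Unset Printing Implicit Defensive.

Import Order.TTheory GRing.Theory Num.Theory.
Local Open Scope ring_scope.
Local Open Scope sesquilinear_scope.

Section HermitianForm.
Context {C : numClosedFieldType}.

Lemma eigenvalue_spectral_diag n (A : 'M[C]_n) j :
  A \is normalmx -> eigenvalue A (spectral_diag A 0 j).
Proof.
move=> /orthomx_spectralP eqA; set P := spectralmx A in eqA *.
have Punit : P \in unitmx := spectral_unit A.
apply/eigenvalueP; exists (row j P).
  rewrite -row_mul {1}eqA !mulmxA mulmxV // mul1mx mul_diag_mx.
  by apply/rowP => i; rewrite !mxE.
rewrite rowE mulmx_free_eq0 ?row_free_unit //.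
by apply/eqP => /matrixP/(_ 0 j)/eqP; rewrite !mxE !eqxx oner_eq0.
Qed.

Lemma hermitian_eigenvalue_real n (A : 'M[C]_n) a :
  A \is hermsymmx -> eigenvalue A a -> a \is Num.real.
Proof.
move=> /is_hermitianmxP; rewrite expr0 scale1r => Aherm /eigenvalueP [x xA x_neq0].
have xAx : (x *m A *m x^t*) 0 0 = a * (x *m x^t*) 0 0.
  by rewrite xA -scalemxAl mxE.
have xAx_real : (x *m A *m x^t*) 0 0 \is Num.real.
  apply/CrealP.
  have -> : ((x *m A *m x^t*) 0 0)^* = ((x *m A *m x^t*)^t*) 0 0.
    by rewrite !mxE.
  by rewrite !trmx_mul !map_mxM trmxCK -Aherm mulmxA.
have xx_gt0 : 0 < (x *m x^t*) 0 0 by rewrite -dotmxE dnorm_gt0.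
have -> : a = (x *m A *m x^t*) 0 0 / (x *m x^t*) 0 0.
  by rewrite xAx mulfK // gt_eqF.
by apply: rpredM => //; rewrite rpredV gtr0_real.
Qed.

Lemma hermitian_form_le n (A : 'M[C]_n) (l : C) :
  A \is hermsymmx -> (forall a, eigenvalue A a -> a <= l) ->
  forall y : 'rV_n, (y *m A *m y^t*) 0 0 <= l * (y *m y^t*) 0 0.
Proof.
move=> Aherm Al y; set P := spectralmx A; set D := spectral_diag A.
have Punitary : P \is unitarymx := spectral_unitarymx A.
have eqA : A = P^t* *m diag_mx D *m P.
  by rewrite -invmx_unitary //; apply/orthomx_spectralP/hermitian_normalmx.
set w := y *m P^t*.
have wE : w^t* = P *m y^t* by rewrite trmx_mul map_mxM trmxCK.
have -> : y *m A *m y^t* = w *m diag_mx D *m w^t*.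
  by rewrite wE eqA !mulmxA.
have -> : y *m y^t* = w *m w^t* by rewrite wE mulmxA mulmxKtV.
rewrite mul_mx_diag !mxE mulr_sumr; apply: ler_sum => j _; rewrite !mxE.
rewrite mulrAC [l * _]mulrC; apply: ler_wpM2l; first exact: mul_conjC_ge0.
exact/Al/eigenvalue_spectral_diag/hermitian_normalmx.
Qed.

End HermitianForm.

Lemma symmetric_form_le (R : rcfType) n (A : 'M[R]_n) (l : R) :
  A^T = A -> (forall a, eigenvalue A a -> a <= l) ->
  forall x : 'rV_n, (x *m A *m x^T) 0 0 <= l * (x *m x^T) 0 0.
Proof.
move=> Asym Al x; pose f := real_complex R.
have map_conj p q (M : 'M[R]_(p, q)) : (map_mx f M)^t* = map_mx f M^T.
  by apply/matrixP => i j; rewrite !mxE; apply: conjc_real.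
have Aherm : map_mx f A \is hermsymmx.
  by apply/is_hermitianmxP; rewrite expr0 scale1r map_conj Asym.
have Af_le a : eigenvalue (map_mx f A) a -> a <= f l.
  move=> Aa; have /RRe_real Ea := hermitian_eigenvalue_real Aherm Aa.
  by move: Aa; rewrite -Ea eigenvalue_map lecR; apply: Al.
have := hermitian_form_le Aherm Af_le (map_mx f x).
by rewrite map_conj -!map_mxM ![map_mx f _ 0 0]mxE -rmorphM lecR.
Qed.

Lemma sqr_sum_le_card_sum_sqr (R : realDomainType) (T : finType) (A : {pred T})
    (F : T -> R) :
  (\sum_(i in A) F i) ^+ 2 <= #|A|%:R * \sum_(i in A) F i ^+ 2.
Proof.
set S := \sum_(i in A) F i; set Q := \sum_(i in A) F i ^+ 2.
have dev_ge0 : 0 <= \sum_(i in A) \sum_(j in A) (F i - F j) ^+ 2.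
  by apply: sumr_ge0 => i _; apply: sumr_ge0 => j _; apply: sqr_ge0.
have sum_sqr_dev : \sum_(i in A) \sum_(j in A) (F i - F j) ^+ 2
    = \sum_(i in A) \sum_(j in A) F i ^+ 2 + \sum_(i in A) \sum_(j in A) F j ^+ 2
      - 2%:R * \sum_(i in A) \sum_(j in A) F i * F j.
  rewrite -big_split mulr_sumr -sumrB; apply: eq_bigr => i _.
  rewrite -big_split mulr_sumr -sumrB; apply: eq_bigr => j _.
  by rewrite /= sqrrB; ring.
have sum_sqr_i : \sum_(i in A) \sum_(j in A) F i ^+ 2 = #|A|%:R * Q.
  by rewrite mulr_natl -sumrMnl; apply: eq_bigr => i _; rewrite sumr_const.
have sum_sqr_j : \sum_(i in A) \sum_(j in A) F j ^+ 2 = #|A|%:R * Q.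
  by rewrite mulr_natl -sumr_const.
have sum_prod : \sum_(i in A) \sum_(j in A) F i * F j = S ^+ 2.
  by rewrite expr2 mulr_suml; apply: eq_bigr => i _; rewrite mulr_sumr.
move: dev_ge0; rewrite sum_sqr_dev sum_sqr_i sum_sqr_j sum_prod; lra.
Qed.

Lemma row_mulmx_tr_gt0 (R : realDomainType) n (x : 'rV[R]_n) :
  x != 0 -> 0 < (x *m x^T) 0 0.
Proof.
move=> x_neq0; have [i xi_neq0] : exists i, x 0 i != 0.
  apply/existsP; apply: contraR x_neq0 => /existsPn x0.
  by apply/eqP/rowP => i; rewrite mxE; apply/eqP/negPn.
rewrite mxE (bigD1 i) //= ltr_wpDr //.
  by apply: sumr_ge0 => j _; rewrite mxE -expr2 sqr_ge0.
by rewrite mxE -expr2 lt_def sqrf_eq0 xi_neq0 sqr_ge0.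
Qed.

Section AverageMatrix.
Variables (R : realType) (L k m : nat) (G : 'I_k -> {set 'I_L}).
Hypothesis G_card : forall g, #|G g| = m.
Hypothesis G_disjoint : forall g1 g2, g1 != g2 -> [disjoint G g1 & G g2].
Hypothesis G_cover : \bigcup_(g < k) G g = [set: 'I_L].

Lemma mul_row_tr_avg_mx (u : 'rV[R]_L) g :
  (u *m (avg_mx R m G)^T) 0 g = m%:R^-1 * \sum_(i in G g) u 0 i.
Proof.
rewrite mxE mulr_sumr [RHS]big_mkcond; apply: eq_bigr => i _.
by rewrite !mxE; case: (i \in G g); rewrite ?mulr0 // mulrC.
Qed.

Lemma avg_mx_form_le (u : 'rV[R]_L) :
  (u *m (avg_mx R m G)^T *m avg_mx R m G *m u^T) 0 0 <= (u *m u^T) 0 0 / m%:R.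
Proof.
set M := avg_mx R m G; set v := u *m M^T.
have -> : u *m M^T *m M *m u^T = v *m v^T by rewrite trmx_mul trmxK !mulmxA.
have -> : (u *m u^T) 0 0 = \sum_g \sum_(i in G g) u 0 i ^+ 2.
  rewrite -(partition_disjoint_bigcup _ _ G_disjoint) G_cover mxE.
  by apply: eq_big => [i|i _]; rewrite ?in_setT // mxE expr2.
rewrite mxE mulr_suml; apply: ler_sum => g _.
rewrite [v^T _ _]mxE -expr2 mul_row_tr_avg_mx exprMn expr2 -mulrA mulrC.
apply: ler_wpM2r; first by rewrite invr_ge0.
have [m0|m_gt0] := posnP m.
  by rewrite m0 invr0 mul0r; apply: sumr_ge0 => i _; apply: sqr_ge0.
by rewrite ler_pdivrMl ?ltr0n // -{1}(G_card g) sqr_sum_le_card_sum_sqr.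
Qed.

End AverageMatrix.

Theorem mainTheorem6 (R : realType) (L d k m : nat) (V : 'M[R]_(L, d))
  (G : 'I_k -> {set 'I_L})
  (hL : L = (k * m)%N)
  (hsize : forall g, #|G g| = m)
  (hdisj : forall g1 g2, g1 != g2 -> [disjoint G g1 & G g2])
  (hcover : \bigcup_(g < k) G g = [set: 'I_L])
  (lH lHbar : R)
  (hH : is_lambda_max (2%:R *: (V^T *m V)) lH)
  (hHbar : is_lambda_max
             (2%:R *: (V^T *m (avg_mx R m G)^T *m avg_mx R m G *m V)) lHbar) :
  lHbar <= lH / m%:R.
Proof.
have [/eigenvalueP [x xHbar x_neq0] _] := hHbar.
have [_ H_le] := hH.
set M := avg_mx R m G in xHbar.
set u := x *m V^T.
have xx_gt0 := row_mulmx_tr_gt0 x_neq0.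
have Hbar_form : lHbar * (x *m x^T) 0 0 = 2%:R * (u *m M^T *m M *m u^T) 0 0.
  have := congr1 (fun B => (B *m x^T) 0 0) xHbar.
  rewrite /= -scalemxAr -!scalemxAl ![(_ *: (_ : 'M_1)) 0 0]mxE => <-.
  by rewrite /u trmx_mul trmxK !mulmxA.
have H_form : 2%:R * (u *m u^T) 0 0 <= lH * (x *m x^T) 0 0.
  have H_sym : (2%:R *: (V^T *m V))^T = 2%:R *: (V^T *m V).
    by rewrite linearZ /= trmx_mul trmxK.
  have := symmetric_form_le H_sym H_le x.
  rewrite -scalemxAr -scalemxAl [(_ *: (_ : 'M_1)) 0 0]mxE.
  by rewrite /u trmx_mul trmxK !mulmxA.
rewrite -(ler_pM2r xx_gt0) Hbar_form mulrAC.
apply: (le_trans (y := 2%:R * ((u *m u^T) 0 0 / m%:R))).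
  by apply: ler_wpM2l; [apply: ler0n | apply: avg_mx_form_le].
by rewrite mulrA ler_wpM2r ?invr_ge0 ?ler0n.
Qed.
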